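(* For all $m\in\mathbb{N}$ and $\boldsymbol{\mu}\in\Delta_\mathbb{N}$, with $\boldsymbol{X}\sim\boldsymbol{\mu}^m$ and $\widehat{\boldsymbol{\mu}}_m$ its empirical measure, $$\mathbb{E}\,\Phi_m(\widehat{\boldsymbol{\mu}}_m)\le 2\Lambda_m(\boldsymbol{\mu}),$$ and for every $\delta\in(0,1)$, with probability at least $1-\delta$, $$\Phi_m(\widehat{\boldsymbol{\mu}}_m)\le 2\Lambda_m(\boldsymbol{\mu})+\sqrt{\log(1/\delta)/m}.$$
   Context: $\Delta_\mathbb{N}$ is the set of probability distributions on $\mathbb{N}=\{1,2,\dots\}$. For $\boldsymbol{X}=(X_1,\dots,X_m)$ i.i.d. from $\boldsymbol{\mu}$, $\widehat{\boldsymbol{\mu}}_m(i)=\frac1m\sum_{t=1}^m\mathbb{I}\{X_t=i\}$. $\Phi_m(\widehat{\boldsymbol{\mu}}_m):=\frac1{\sqrt m}\sum_{j\in\mathbb{N}}\sqrt{\widehat{\boldsymbol{\mu}}_m(j)}$. $\Lambda_m(\boldsymbol{\mu}):=\sum_{j:\boldsymbol{\mu}(j)<1/m}\boldsymbol{\mu}(j)+\frac{1}{2\sqrt m}\sum_{j:\boldsymbol{\mu}(j)\ge 1/m}\sqrt{\boldsymbol{\mu}(j)}$. $\log$ is the natural logarithm. *)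

From HB Require Import structures.
From mathcomp Require Import all_boot all_order all_algebra.
From mathcomp Require Import all_classical all_reals all_analysis.
Set Implicit Arguments. Unset Strict Implicit. Unset Printing Implicit Defensive.
Import Order.TTheory GRing.Theory Num.Theory.
Local Open Scope classical_set_scope.
Local Open Scope ring_scope.

Section Defs.
Variable R : realType.

(* mu is a probability distribution on N = {1,2,...}: nonnegative, no mass
   at 0 (so it lives on {1,2,...}), total mass 1. *)
Definition is_distrN (mu : nat -> R) : Prop :=
  [/\ forall j, 0 <= mu j, mu 0%N = 0 &
      (\esum_(j in [set: nat]) (mu j)%:E = 1)%E].

Definition sample_prob (m : nat) (mu : nat -> R) (x : m.-tuple nat) : R :=
  \prod_(t < m) mu (tnth x t).

Definition emp (m : nat) (x : m.-tuple nat) (i : nat) : R :=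
  (count (pred1 i) x)%:R / m%:R.

Definition Phi (m : nat) (x : m.-tuple nat) : \bar R :=
  ((Num.sqrt m%:R)^-1%:E *
   \esum_(j in [set j : nat | (0 < j)%N]) (Num.sqrt (emp x j))%:E)%E.

Definition Lambda (m : nat) (mu : nat -> R) : \bar R :=
  (\esum_(j in [set j : nat | (0 < j)%N /\ (mu j < m%:R^-1)%R]) (mu j)%:E
   + (2 * Num.sqrt m%:R)^-1%:E *
     \esum_(j in [set j : nat | (0 < j)%N /\ (m%:R^-1 <= mu j)%R])
        (Num.sqrt (mu j))%:E)%E.

Definition E_Phi (m : nat) (mu : nat -> R) : \bar R :=
  (\esum_(x in [set: m.-tuple nat]) ((sample_prob mu x)%:E * Phi x))%E.

Definition Prob (m : nat) (mu : nat -> R) (A : set (m.-tuple nat)) : \bar R :=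
  (\esum_(x in A) (sample_prob mu x)%:E)%E.

End Defs.

From HB Require Import structures.
From mathcomp Require Import all_boot all_order all_algebra.
From mathcomp Require Import all_classical all_reals all_analysis.
From mathcomp Require Import ring lra.
Set Implicit Arguments. Unset Strict Implicit. Unset Printing Implicit Defensive.
Import Order.TTheory GRing.Theory Num.Theory.
Local Open Scope classical_set_scope.
Local Open Scope ring_scope.

(* Give every symbol j the weight w(j) = 1 if mu(j) < 1/m and
   w(j) = 1/(2 sqrt(m mu(j))) otherwise; w takes values in [0, 1].  For a
   count n, sqrt(n/m)/sqrt m is at most n w(j)/m when mu(j) < 1/m (as
   sqrt n <= n) and at most n w(j)/m + sqrt(mu(j))/(2 sqrt m) otherwise
   (AM-GM).  Summing over j gives the deterministic bound
     Phi_m(hat mu_m) <= (1/m) sum_t w(X_t) + L,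
   where L is the large-mass part of Lambda_m(mu).  Moreover E w(X) + L is
   at most 2 Lambda_m(mu).  Taking expectations gives the first claim; the
   second follows from a Chernoff bound for the i.i.d. sample mean of the
   [0,1]-valued w(X_t), with the Bernoulli moment bound
   1 - p + p e^t <= e^{tp + t^2/4}. *)

Lemma expR_le_chord (R : realType) (th g : R) : 0 <= g <= 1 ->
  expR (th * g) <= 1 - g + g * expR th.
Proof.
move=> /andP[g0 g1].
have := convex_expR (Itv01 g0 g1) th 0.
rewrite !convRE /= expR0 /unstable.onem mulr0 addr0 mulr1 (mulrC g th) => h.
by apply: (le_trans h); lra.
Qed.

(* The sign condition making t |-> (1 - p + p e^t) e^{-(tp + t^2/4)}
   nonincreasing on [0, +oo). *)
Lemma bernoulli_mgf_deriv_le (R : realType) (p t : R) : 0 <= p <= 1 -> 0 <= t ->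
  p * expR t <= (p + t / 2) * (1 - p + p * expR t).
Proof.
move=> /andP[p0 p1] t0.
have et1 : 1 <= expR t by rewrite -expR0 ler_expR.
have [hp|hp] := leP (1 - p) (t / 2).
  have h1 : 1 <= p + t / 2 by lra.
  have h2 : 0 <= p * expR t by rewrite mulr_ge0 // expR_ge0.
  nra.
(* otherwise write e^t = u^2 with u = e^{t/2} and use 1 + x <= e^x *)
set x := t / 2 in hp *; set u := expR x.
have x0 : 0 <= x by rewrite /x; lra.
have eu : expR t = u * u by rewrite -expRD /x -splitr.
have u0 : 0 < u by apply: expR_gt0.
have ux : u * (1 - x) <= 1.
  have : 1 - x <= u^-1 by rewrite -expRN; apply: expR_ge1Dx.
  by rewrite -(ler_pM2l u0) mulfV ?gt_eqF.
have pu : p * u <= p + x.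
  have : p * u * (1 - x) <= (p + x) * (1 - x) by nra.
  by rewrite ler_pM2r; lra.
have : p * (u * u) * (1 - p - x) <= (p + x) * (1 - p).
  have -> : p * (u * u) * (1 - p - x) = (p * u) * (u * (1 - p - x)) by ring.
  apply: (le_trans (y := (p + x) * (u * (1 - p - x)))).
    by rewrite ler_wpM2r // mulr_ge0 //; lra.
  by rewrite ler_wpM2l //; nra.
rewrite eu; nra.
Qed.

(* Moment generating function of a [0,1]-valued variable of mean p
   (a Hoeffding-type bound with variance proxy 1/2). *)
Lemma bernoulli_mgf_le (R : realType) (p t : R) : 0 <= p <= 1 -> 0 <= t ->
  1 - p + p * expR t <= expR (t * p + t ^+ 2 / 4).
Proof.
move=> hp t0.
pose f := fun s : R => 1 - p + p * expR s.
pose g := fun s : R => - (s * p + s ^+ 2 / 4).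
pose F := fun s : R => f s * expR (g s).
pose dF := fun s : R => expR (g s) * (p * expR s - (p + s / 2) * f s).
have dF_ok s : is_derive s (1:R) F (dF s).
  have df : is_derive s (1:R) f (p * expR s).
    by apply: is_derive_eq; rewrite add0r mul1r.
  have dg : is_derive s (1:R) g (- (p + s / 2)).
    apply: is_derive_eq.
    by rewrite !scaler0 ?addr0 ?add0r /GRing.scale /= ?mulr1; field.
  have dexpg : is_derive s (1:R) (expR \o g) (expR (g s) * (- (p + s / 2))).
    exact: (is_derive1_comp (is_derive_expR (g s)) dg).
  have -> : F = f * (expR \o g) by [].
  by apply: is_derive_eq; rewrite /dF /= /GRing.scale /=; ring.
have [c c0t] := MVT_segment t0 (fun x _ => dF_ok x)
  (derivable_within_continuous (fun x _ => let: DeriveDef h _ := dF_ok x in h)).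
have dFc : dF c <= 0.
  apply: mulr_ge0_le0; first exact: expR_ge0.
  rewrite subr_le0; apply: bernoulli_mgf_deriv_le => //.
  by move: c0t; rewrite in_itv /= => /andP[].
have F0 : F 0 = 1 by rewrite /F /f /g expR0 !mul0r expr0n /= mul0r addr0 oppr0 expR0; lra.
move=> mvt.
have : F t <= 1 by rewrite -F0; nra.
by rewrite /F /g expRN ler_pdivrMr ?expR_gt0 // mul1r.
Qed.

(* Small masses use sqrt n <= n; large ones use AM-GM. *)
Lemma sqrt_count_le (R : realType) (M mu : R) (n : nat) : 0 < M -> 0 <= mu ->
  (Num.sqrt M)^-1 * Num.sqrt (n%:R / M) <=
  M^-1 * (n%:R * (if mu < M^-1 then 1 else (2 * Num.sqrt (M * mu))^-1))
  + (if M^-1 <= mu then (2 * Num.sqrt M)^-1 * Num.sqrt mu else 0).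
Proof.
move=> M0 mu0.
set r := Num.sqrt M; set q := Num.sqrt (n%:R : R).
have r0 : 0 < r by rewrite sqrtr_gt0.
have rr : M = r * r by rewrite -expr2 sqr_sqrtr // ltW.
have q0 : 0 <= q by apply: sqrtr_ge0.
have qq : (n%:R : R) = q * q by rewrite -expr2 sqr_sqrtr.
have -> : Num.sqrt (n%:R / M) = q / r by rewrite sqrtrM ?ler0n // sqrtrV // ltW.
have [small|big] := ltP mu M^-1.
  have q_le_qq : q <= q * q.
    have [n0|n1] := eqVneq n 0%N; first by rewrite /q n0 sqrtr0 mul0r.
    have : Num.sqrt 1 <= q by rewrite /q ler_sqrt ?ler1n ?lt0n.
    rewrite sqrtr1; nra.
  rewrite addr0 mulr1 qq rr.
  have -> : r^-1 * (q / r) = q / (r * r) by field; lra.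
  by rewrite mulrC ler_pM2l // invr_gt0 mulr_gt0.
have mu_gt0 : 0 < mu by apply: lt_le_trans big; rewrite invr_gt0.
set v := Num.sqrt mu.
have v0 : 0 < v by rewrite sqrtr_gt0.
have -> : Num.sqrt (M * mu) = r * v by rewrite sqrtrM // ltW.
rewrite qq rr -subr_ge0.
have -> : (r * r)^-1 * (q * q / (2 * (r * v))) + (2 * r)^-1 * v - r^-1 * (q / r)
   = (q - r * v) ^+ 2 / (2 * (r * v) * (r * r)).
  by field; apply/andP; split; apply/lt0r_neq0.
by rewrite divr_ge0 ?sqr_ge0 // !mulr_ge0 // ltW.
Qed.

Lemma esumZl (R : realType) (T : choiceType) (I : set T) (a : T -> \bar R) (r : R) :
  0 <= r -> (forall i, (0 <= a i)%E) ->
  \esum_(i in I) (r%:E * a i)%E = (r%:E * \esum_(i in I) a i)%E.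
Proof.
move=> r0 a0; rewrite /esum -ereal_supZl//; last first.
  by apply/set0P; exists 0%E; exists set0; [exact: fsets_set0|rewrite fsbig_set0].
congr ereal_sup; apply/seteqP; split => x /=.
- move=> [A fA <-]; exists (\sum_(i \in A) a i)%E; first by exists A.
  by rewrite ge0_mule_fsumr.
- by move=> [y [A fA <-] <-]; exists A => //; rewrite ge0_mule_fsumr.
Qed.

Lemma esum_fineK (R : realType) (T : choiceType) (I : set T) (a : T -> R) (b : R) :
  (forall i, 0 <= a i) -> (\esum_(i in I) (a i)%:E <= b%:E)%E ->
  \esum_(i in I) (a i)%:E = (fine (\esum_(i in I) (a i)%:E))%:E.
Proof.
move=> a0 le_b; have s0 : (0 <= \esum_(i in I) (a i)%:E)%E.
  by apply: esum_ge0 => i _; rewrite lee_fin.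
by rewrite fineK // ge0_fin_numE // (le_lt_trans le_b) ?ltry.
Qed.

Lemma esum_subset (R : realType) (T : choiceType) (A B : set T) (a : T -> \bar R) :
  A `<=` B -> (forall i, (0 <= a i)%E) ->
  (\esum_(i in A) a i <= \esum_(i in B) a i)%E.
Proof.
move=> AB a0; rewrite [leRHS](esumID A) // (setIidr AB).
by rewrite leeDl // esum_ge0.
Qed.

Lemma esum_tuple_prod (R : realType) (m : nat) (h : nat -> nat -> R) (c : nat -> R) :
  (forall t j, 0 <= h t j) ->
  (forall t, (t < m)%N -> \esum_(j in [set: nat]) (h t j)%:E = (c t)%:E) ->
  \esum_(x in [set: m.-tuple nat]) (\prod_(t < m) h t (tnth x t))%:E =
  (\prod_(t < m) c t)%:E.
Proof.
elim: m h c => [|m IH] h c h0 hc.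
  have -> : [set: 0.-tuple nat] = [set [tuple]].
    by apply/seteqP; split => x // _; rewrite /= (tuple0 x).
  by rewrite esum_set1 ?big_ord0 // lee_fin.
have c0 t : (t < m.+1)%N -> 0 <= c t.
  by move=> /hc; rewrite -lee_fin => <-; apply: esum_ge0 => j _; rewrite lee_fin.
rewrite (reindex_esum (setT `*`` (fun _ => setT)) setT
  (fun z : nat * m.-tuple nat => [tuple of z.1 :: z.2])); last first.
  split.
  - by move=> z.
  - by move=> [a y] [b z] _ _ /= /(congr1 val) /= [-> /val_inj ->].
  - by move=> x _; exists (thead x, behead_tuple x) => //=; rewrite [RHS]tuple_eta.
rewrite -(esum_esum (I := setT) (J := fun _ => setT)
  (a := fun j (y : m.-tuple nat) => (\prod_(t < m.+1) h t (tnth [tuple of j :: y] t))%:E));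
  last by move=> i j _ _; rewrite lee_fin prodr_ge0.
transitivity (\esum_(j in [set: nat]) ((h 0%N j)%:E * (\prod_(t < m) c t.+1)%:E)%E).
  apply: eq_esum => j _.
  rewrite (eq_esum (b := fun y : m.-tuple nat =>
       ((h 0%N j)%:E * (\prod_(t < m) h t.+1 (tnth y t))%:E)%E)); last first.
    move=> y _ /=; rewrite big_ord_recl /= EFinM tnth0; congr (_ * _)%E.
    by congr (_%:E); apply: eq_bigr => i _; rewrite tnthS.
  rewrite esumZl //; last by move=> y; rewrite lee_fin prodr_ge0.
  by rewrite (IH (fun t => h t.+1) (fun t => c t.+1)) // => t tm; apply: hc.
under eq_esum do rewrite muleC.
rewrite esumZl ?hc // ?big_ord_recl -?EFinM 1?mulrC //.
- by apply: prodr_ge0 => i _; apply: c0; rewrite ltnS.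
- by move=> y; rewrite lee_fin.
Qed.

Lemma esum_count (R : realType) (m : nat) (x : m.-tuple nat) (f : nat -> R) :
  (forall j, 0 <= f j) ->
  \esum_(j in [set: nat]) ((count (pred1 j) x)%:R * f j)%:E =
  (\sum_(t < m) f (tnth x t))%:E.
Proof.
move=> f0.
have countE j : (count (pred1 j) x)%:R * f j =
    \sum_(t < m) (if tnth x t == j then f j else 0).
  rewrite -sum1_count big_tuple natr_sum mulr_suml big_mkcond /=.
  by apply: eq_bigr => t _; case: ifP => _; rewrite ?mul1r ?mul0r.
under eq_esum do rewrite countE -sumEFin.
rewrite esum_sum; last by move=> j t _ _; case: ifP => _; rewrite lee_fin.
rewrite -sumEFin; apply: eq_bigr => t _.
rewrite (eq_esum (b := fun j => if j \in [set tnth x t] then (f j)%:E else 0%E)).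
  by rewrite -esum_mkcond esum_set1 // lee_fin.
move=> j _; case: eqP => [<-|ne]; first by rewrite mem_set.
by rewrite memNset // => h; apply: ne; rewrite h.
Qed.

Section Sampling.
Variables (R : realType) (m : nat) (mu : nat -> R) (f : nat -> R).
Hypothesis mu_ge0 : forall j, 0 <= mu j.
Hypothesis mu_sum1 : \esum_(j in [set: nat]) (mu j)%:E = 1%E.
Hypothesis f01 : forall j, 0 <= f j <= 1.

Let f_ge0 j : 0 <= f j. Proof. by case/andP: (f01 j). Qed.

Definition mean (g : nat -> R) : R := fine (\esum_(j in [set: nat]) (mu j * g j)%:E).

Lemma meanE : \esum_(j in [set: nat]) (mu j * f j)%:E = (mean f)%:E.
Proof.
apply: (esum_fineK (b := 1)) => [j|]; first by rewrite mulr_ge0.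
rewrite -mu_sum1; apply: le_esum => j _; rewrite lee_fin.
by rewrite ler_piMr //; case/andP: (f01 j).
Qed.

Lemma mean_ge0 : 0 <= mean f.
Proof. by rewrite -lee_fin -meanE esum_ge0 // => j _; rewrite lee_fin mulr_ge0. Qed.

Lemma mean_le1 : mean f <= 1.
Proof.
rewrite -lee_fin -meanE -mu_sum1; apply: le_esum => j _; rewrite lee_fin.
by rewrite ler_piMr //; case/andP: (f01 j).
Qed.

Lemma sample_prob_ge0 (x : m.-tuple nat) : 0 <= sample_prob mu x.
Proof. exact: prodr_ge0. Qed.

Lemma esum_sample_prob : \esum_(x in [set: m.-tuple nat]) (sample_prob mu x)%:E = 1%E.
Proof.
rewrite (@esum_tuple_prod R m (fun _ j => mu j) (fun _ => 1)) //.
by rewrite big1.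
Qed.

Lemma Prob_ge_compl (A : set (m.-tuple nat)) (b : R) :
  (Prob mu (~` A) <= b%:E)%E -> ((1 - b)%:E <= Prob mu A)%E.
Proof.
have := esum_sample_prob; rewrite (esumID A) ?setTI; last first.
  by move=> x _; rewrite lee_fin sample_prob_ge0.
rewrite /Prob; set a := esum A _; set c := esum (~` A) _.
have a0 : (0 <= a)%E by apply: esum_ge0 => x _; rewrite lee_fin sample_prob_ge0.
have c0 : (0 <= c)%E by apply: esum_ge0 => x _; rewrite lee_fin sample_prob_ge0.
move: a0 c0; case: a => [ra| |] //; case: c => [rc| |] // _ _.
by rewrite -EFinD => -[] hac; rewrite !lee_fin; lra.
Qed.

Lemma esum_sample_coord (t : 'I_m) :
  \esum_(x in [set: m.-tuple nat]) (sample_prob mu x * f (tnth x t))%:E = (mean f)%:E.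
Proof.
pose h s j := mu j * (if s == (t : nat) then f j else 1).
have pick (F : 'I_m -> R) :
    \prod_(s < m) (if (s : nat) == (t : nat) then F s else 1) = F t.
  by rewrite -big_mkcond /= (big_pred1 t).
rewrite (eq_esum (b := fun x : m.-tuple nat => (\prod_(s < m) h s (tnth x s))%:E)).
  rewrite (@esum_tuple_prod R m h (fun s => if s == (t : nat) then mean f else 1)).
  - by rewrite pick.
  - by move=> s j; rewrite mulr_ge0 //; case: ifP.
  - move=> s _; rewrite /h; case: ifP => _; first by rewrite meanE.
    by under eq_esum do rewrite mulr1.
by move=> x _; rewrite big_split /= pick.
Qed.

Lemma esum_sample_sum :
  \esum_(x in [set: m.-tuple nat])
     (sample_prob mu x * \sum_(t < m) f (tnth x t))%:E = (m%:R * mean f)%:E.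
Proof.
under eq_esum do rewrite mulr_sumr -sumEFin.
rewrite esum_sum; last by move=> x t _ _; rewrite lee_fin mulr_ge0 ?sample_prob_ge0.
under eq_bigr do rewrite esum_sample_coord.
by rewrite sumEFin sumr_const card_ord mulr_natl.
Qed.

Lemma esum_expR_le (th : R) : 0 <= th ->
  (\esum_(j in [set: nat]) (mu j * expR (th * f j))%:E
     <= (expR (th * mean f + th ^+ 2 / 4))%:E)%E.
Proof.
move=> th0.
have et : 0 <= expR th - 1 by rewrite subr_ge0 -expR0 ler_expR.
apply: (le_trans (y := \esum_(j in [set: nat])
   ((mu j)%:E + ((expR th - 1) * (mu j * f j))%:E)%E)).
  apply: le_esum => j _; rewrite -EFinD lee_fin.
  have -> : mu j + (expR th - 1) * (mu j * f j) = mu j * (1 - f j + f j * expR th).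
    by ring.
  by rewrite ler_wpM2l // expR_le_chord.
rewrite esumD; last 2 first.
- by move=> j _; rewrite lee_fin.
- by move=> j _; rewrite lee_fin !mulr_ge0.
under [X in (_ + X)%E]eq_esum do rewrite EFinM.
rewrite esumZl // ?meanE ?mu_sum1; last by move=> j; rewrite lee_fin mulr_ge0.
rewrite -EFinM -EFinD lee_fin.
have -> : 1 + (expR th - 1) * mean f = 1 - mean f + mean f * expR th by ring.
by apply: bernoulli_mgf_le; rewrite ?mean_ge0 ?mean_le1.
Qed.

Lemma sample_prob_expR (th : R) (x : m.-tuple nat) :
  sample_prob mu x * expR (th * \sum_(t < m) f (tnth x t)) =
  \prod_(t < m) (mu (tnth x t) * expR (th * f (tnth x t))).
Proof. by rewrite big_split /= mulr_sumr expR_sum. Qed.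

(* Hoeffding-type tail: the sample sum of f exceeds m (mean f + s) with
   mu^m-probability at most exp(-m s^2).  Chernoff's bound with th = 2s. *)
Lemma sample_sum_tail (s : R) : 0 <= s ->
  (\esum_(x in [set x : m.-tuple nat | (m%:R * (mean f + s) < \sum_(t < m) f (tnth x t))%R])
     (sample_prob mu x)%:E <= (expR (- (m%:R * s ^+ 2)))%:E)%E.
Proof.
move=> s0; set th := 2 * s; set p := mean f.
have th0 : 0 <= th by rewrite mulr_ge0.
set a := fun j => mu j * expR (th * f j).
have a0 j : 0 <= a j by rewrite mulr_ge0 ?expR_ge0.
have aE := esum_expR_le th0; rewrite -/a in aE.
have cE := esum_fineK a0 aE; set c := fine _ in cE.
have c0 : 0 <= c by rewrite -lee_fin -cE esum_ge0 // => j _; rewrite lee_fin.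
have cle : c <= expR (th * p + th ^+ 2 / 4) by rewrite -lee_fin -cE.
set K := expR (- (th * (m%:R * (p + s)))).
apply: (le_trans (y := \esum_(x in [set: m.-tuple nat])
   (K * \prod_(t < m) a (tnth x t))%:E)).
  rewrite esum_mkcond; apply: le_esum => x _; case: ifP => hx; last first.
    by rewrite lee_fin mulr_ge0 ?expR_ge0 // prodr_ge0.
  have {}hx : m%:R * (p + s) < \sum_(t < m) f (tnth x t) by move: hx; rewrite in_setE.
  rewrite -sample_prob_expR /K mulrCA -expRD lee_fin ler_peMr ?sample_prob_ge0 //.
  by rewrite -[X in X <= _]expR0 ler_expR addrC -mulrBr mulr_ge0 // subr_ge0 ltW.
under eq_esum do rewrite EFinM.
rewrite esumZl ?expR_ge0 //; last by move=> x; rewrite lee_fin prodr_ge0.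
rewrite (@esum_tuple_prod R m (fun _ => a) (fun _ => c)) // -EFinM lee_fin.
apply: (le_trans (y := K * expR (th * p + th ^+ 2 / 4) ^+ m)).
  by rewrite ler_wpM2l ?expR_ge0 // prodr_const card_ord lerXn2r // nnegrE expR_ge0.
rewrite -expRM_natl -expRD /K.
have -> : - (th * (m%:R * (p + s))) + m%:R * (th * p + th ^+ 2 / 4) =
  - (m%:R * s ^+ 2) by rewrite /th; field.
by [].
Qed.

End Sampling.

Section EmpiricalRootSum.
Variables (R : realType) (m : nat) (mu : nat -> R).
Hypothesis m_gt0 : (0 < m)%N.
Hypothesis mu_distr : is_distrN mu.

Local Notation M := (m%:R : R).

Let M_gt0 : 0 < M. Proof. by rewrite ltr0n. Qed.
Let mu_ge0 j : 0 <= mu j. Proof. by case: mu_distr. Qed.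
Let mu_sum1 : \esum_(j in [set: nat]) (mu j)%:E = 1%E. Proof. by case: mu_distr. Qed.

Definition weight (j : nat) : R :=
  if mu j < M^-1 then 1 else (2 * Num.sqrt (M * mu j))^-1.

Lemma weight01 j : 0 <= weight j <= 1.
Proof.
rewrite /weight; case: ltP => [_|large]; first by rewrite ler01 lexx.
have h1 : 1 <= M * mu j by rewrite -[leLHS](mulfV (lt0r_neq0 M_gt0)) ler_pM2l.
have : 1 <= Num.sqrt (M * mu j) by rewrite -[leLHS]sqrtr1 ler_sqrt //; lra.
by move=> h2; rewrite invr_ge0 invf_le1; lra.
Qed.

Definition small_mass : \bar R :=
  \esum_(j in [set j : nat | (0 < j)%N /\ mu j < M^-1]) (mu j)%:E.
Definition large_roots : \bar R :=
  ((2 * Num.sqrt M)^-1%:E *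
   \esum_(j in [set j : nat | (0 < j)%N /\ (M^-1 <= mu j)%R]) (Num.sqrt (mu j))%:E)%E.

Lemma LambdaE : Lambda m mu = (small_mass + large_roots)%E.
Proof. by []. Qed.

Lemma small_mass_ge0 : (0 <= small_mass)%E.
Proof. by apply: esum_ge0 => j _; rewrite lee_fin. Qed.

Local Notation small := [set j : nat | (0 < j)%N /\ mu j < M^-1].
Local Notation large := [set j : nat | (0 < j)%N /\ M^-1 <= mu j].

(* Pointwise form of the next lemma: a small mass contributes mu j, a
   large one mu j / (2 sqrt(M mu j)) = sqrt(mu j) / (2 sqrt M). *)
Lemma mass_weight_le j :
  ((mu j * weight j)%:E <=
   (if j \in small then (mu j)%:E else 0) +
   (if j \in large then ((2 * Num.sqrt M)^-1)%:E * (Num.sqrt (mu j))%:E else 0))%E.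
Proof.
case: j => [|j].
  have -> : mu 0%N = 0 by case: mu_distr.
  by rewrite mul0r !memNset ?adde0 // => -[].
rewrite /weight; case: ltP => hj.
  by rewrite mem_set // memNset ?mulr1 ?adde0 // => -[_]; rewrite leNgt hj.
rewrite memNset ?mem_set ?add0e //; last by move=> -[_]; rewrite ltNge hj.
have mu_gt0 : 0 < mu j.+1 by apply: (lt_le_trans _ hj); rewrite invr_gt0.
rewrite -EFinM lee_fin sqrtrM ?(ltW M_gt0) //.
set v := Num.sqrt (mu j.+1).
have -> : mu j.+1 = v * v by rewrite -expr2 sqr_sqrtr ?ltW.
rewrite [leLHS](_ : _ = (2 * Num.sqrt M)^-1 * v) //.
by field; rewrite !gt_eqF ?sqrtr_gt0.
Qed.

Lemma mean_weight_le : ((mean mu weight)%:E <= Lambda m mu)%E.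
Proof.
rewrite -(meanE mu_ge0 mu_sum1 weight01) LambdaE /small_mass /large_roots.
rewrite -esumZl ?invr_ge0 ?mulr_ge0 ?sqrtr_ge0 //.
rewrite [X in (_ <= X + _)%E]esum_mkcond [X in (_ <= _ + X)%E]esum_mkcond.
rewrite -esumD; last 2 first.
- by move=> j _; case: ifP; rewrite lee_fin.
- by move=> j _; case: ifP; rewrite // -EFinM lee_fin !mulr_ge0 ?invr_ge0 ?mulr_ge0 ?sqrtr_ge0.
by apply: le_esum => j _; apply: mass_weight_le.
Qed.

Lemma mean_weight_large_le :
  ((mean mu weight)%:E + large_roots <= 2%:E * Lambda m mu)%E.
Proof.
rewrite mule_natl mule2n leeD // ?mean_weight_le // LambdaE.
by rewrite leeDr // small_mass_ge0.
Qed.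

Lemma Phi_le (x : m.-tuple nat) :
  (@Phi R m x <= (M^-1 * \sum_(t < m) weight (tnth x t))%:E + large_roots)%E.
Proof.
have w_ge0 j : 0 <= weight j by case/andP: (weight01 j).
rewrite /Phi -esumZl ?invr_ge0 ?sqrtr_ge0 //.
apply: (le_trans (y := \esum_(j in [set j : nat | (0 < j)%N])
   ((M^-1 * ((count (pred1 j) x)%:R * weight j))%:E +
    (if M^-1 <= mu j then (2 * Num.sqrt M)^-1 * Num.sqrt (mu j) else 0)%:E)%E)).
  apply: le_esum => j _; rewrite -EFinD -EFinM lee_fin /emp /weight.
  exact: sqrt_count_le.
rewrite esumD; last 2 first.
- by move=> j _; rewrite lee_fin !mulr_ge0 ?invr_ge0.
- by move=> j _; case: ifP; rewrite lee_fin // !mulr_ge0 ?invr_ge0 ?mulr_ge0 ?sqrtr_ge0.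
apply: leeD.
  apply: (le_trans (esum_subset (subsetT _) _)).
    by move=> j; rewrite lee_fin !mulr_ge0 ?invr_ge0.
  under eq_esum do rewrite EFinM.
  by rewrite esumZl ?invr_ge0 ?esum_count // => j; rewrite lee_fin mulr_ge0.
rewrite /large_roots -esumZl ?invr_ge0 ?mulr_ge0 ?sqrtr_ge0 //.
rewrite (_ : large = [set j | (0 < j)%N] `&` [set j | M^-1 <= mu j]) // esum_mkcondr.
by apply: le_esum => j _; case: ifP => hj; [rewrite mem_set ?EFinM | rewrite memNset //= hj].
Qed.

Lemma E_Phi_le_mean : (E_Phi m mu <= (mean mu weight)%:E + large_roots)%E.
Proof.
have := Phi_le; have : (0 <= large_roots)%E.
  by rewrite mule_ge0 ?lee_fin ?invr_ge0 ?mulr_ge0 ?sqrtr_ge0 ?esum_ge0 // => j _;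
    rewrite lee_fin sqrtr_ge0.
case: large_roots => [c| |] // c0 hPhi; last by rewrite addey ?leey.
rewrite lee_fin in c0.
have sp0 := sample_prob_ge0 mu_ge0.
apply: (le_trans (y := \esum_(x in [set: m.-tuple nat])
   ((M^-1 * (sample_prob mu x * \sum_(t < m) weight (tnth x t)))%:E +
    (c * sample_prob mu x)%:E)%E)).
  apply: le_esum => x _; rewrite -EFinD.
  apply: (le_trans (lee_wpmul2l _ (hPhi x))); first by rewrite lee_fin.
  by rewrite -EFinD -EFinM lee_fin le_eqVlt; apply/orP; left; apply/eqP; ring.
rewrite esumD; last 2 first.
- by move=> x _; rewrite lee_fin !mulr_ge0 ?invr_ge0 ?sumr_ge0 // => t _;
    case/andP: (weight01 (tnth x t)).
- by move=> x _; rewrite lee_fin mulr_ge0.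
under eq_esum do rewrite EFinM.
under [X in (_ + X)%E]eq_esum do rewrite EFinM.
rewrite !esumZl ?invr_ge0 ?ler0n ?(esum_sample_sum m mu_ge0 mu_sum1 weight01) //;
  last 2 first.
- by move=> x; rewrite lee_fin.
- by move=> x; rewrite lee_fin mulr_ge0 ?sumr_ge0 // => t _; case/andP: (weight01 (tnth x t)).
rewrite (esum_sample_prob m mu_ge0 mu_sum1) mule1 -EFinM mulrA mulVf ?mul1r //.
exact: lt0r_neq0.
Qed.

Lemma E_Phi_le : (E_Phi m mu <= 2%:E * Lambda m mu)%E.
Proof. exact: le_trans E_Phi_le_mean mean_weight_large_le. Qed.

(* Concentration: Phi_m exceeds 2 Lambda_m(mu) + s only if the sample sum
   of the weights exceeds m (mean + s), which has probability <= e^{-m s^2}. *)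
Lemma Phi_tail (s : R) : 0 <= s ->
  (Prob mu (~` [set x : m.-tuple nat | (@Phi R m x <= 2%:E * Lambda m mu + s%:E)%E])
     <= (expR (- (M * s ^+ 2)))%:E)%E.
Proof.
move=> s0; apply: le_trans (sample_sum_tail m mu_ge0 mu_sum1 weight01 s0).
apply: esum_subset => [x /= Phi_big|x]; last by rewrite lee_fin sample_prob_ge0.
rewrite ltNge; apply/negP => sum_small; apply: Phi_big.
apply: (le_trans (Phi_le x)).
apply: (le_trans (y := ((mean mu weight)%:E + large_roots) + s%:E)%E).
  rewrite addeAC -EFinD; apply: leeD => //.
  by rewrite lee_fin ler_pdivrMl.
by apply: leeD => //; exact: mean_weight_large_le.
Qed.

End EmpiricalRootSum.

Theorem theorem3 (R : realType) (m : nat) (mu : nat -> R) :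
  (0 < m)%N -> is_distrN mu ->
  (E_Phi m mu <= 2%:E * Lambda m mu)%E /\
  (forall delta : R, 0 < delta < 1 ->
     (Prob mu [set x : m.-tuple nat |
        (@Phi R m x <= 2%:E * Lambda m mu + (Num.sqrt (ln (delta^-1) / m%:R))%:E)%E]
      >= (1 - delta)%:E)%E).
Proof.
move=> m_gt0 mu_distr; split; first exact: E_Phi_le.
move=> delta /andP[delta_gt0 delta_lt1].
have [mu_ge0 _ mu_sum1] := mu_distr.
set s := Num.sqrt (ln delta^-1 / m%:R).
have log_ge0 : 0 <= ln delta^-1 / m%:R.
  by rewrite divr_ge0 // ln_ge0 // invf_ge1 // ltW.
have tail_delta : expR (- (m%:R * s ^+ 2)) = delta.
  rewrite sqr_sqrtr // mulrC divfK ?pnatr_eq0 -?lt0n //.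
  by rewrite lnV ?posrE // opprK lnK ?posrE.
apply: (Prob_ge_compl mu_ge0 mu_sum1); rewrite -tail_delta.
exact: Phi_tail (sqrtr_ge0 _).
Qed.
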